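(* Let $R$ be a ring, $n$ a positive integer, $P$ a divided weakly prime ideal of $R$, and $I$ a weakly $n$-absorbing ideal of $R$ with $\sqrt{I}=P$. Then $I$ is a weakly primary ideal of $R$.
   Context: All rings are commutative with $1\neq0$. A proper ideal $P$ is weakly prime if $0\neq ab\in P$ implies $a\in P$ or $b\in P$; a weakly prime ideal $P$ is divided if $P\subset xR$ for every $x\in R\setminus P$. A proper ideal $I$ is weakly primary if $0\neq ab\in I$ implies $a\in I$ or $b\in\sqrt{I}$. A proper ideal $I$ is weakly $n$-absorbing if whenever $0\neq a_1\cdots a_{n+1}\in I$ with $a_1,\dots,a_{n+1}\in R$, there are $n$ of the $a_i$'s whose product is in $I$. *)

From mathcomp Require Import all_boot all_order all_algebra.
Set Implicit Arguments. Unset Strict Implicit. Unset Printing Implicit Defensive.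
Import GRing.Theory.
Local Open Scope ring_scope.

Definition is_ideal (R : comNzRingType) (I : R -> Prop) : Prop :=
  [/\ I 0, (forall x y, I x -> I y -> I (x + y)), (forall x, I x -> I (- x))
    & (forall r x, I x -> I (r * x))].

Definition proper_ideal (R : comNzRingType) (I : R -> Prop) : Prop :=
  is_ideal I /\ ~ I 1.

Definition radical (R : comNzRingType) (I : R -> Prop) : R -> Prop :=
  fun x => exists n : nat, I (x ^+ n).

Definition weakly_prime (R : comNzRingType) (P : R -> Prop) : Prop :=
  proper_ideal P /\
  forall a b : R, a * b != 0 -> P (a * b) -> P a \/ P b.

Definition divided_weakly_prime (R : comNzRingType) (P : R -> Prop) : Prop :=
  weakly_prime P /\
  forall x : R, ~ P x -> forall p : R, P p -> exists r : R, p = x * r.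

Definition weakly_primary (R : comNzRingType) (I : R -> Prop) : Prop :=
  proper_ideal I /\
  forall a b : R, a * b != 0 -> I (a * b) -> I a \/ radical I b.

Definition weakly_n_absorbing (R : comNzRingType) (n : nat) (I : R -> Prop) : Prop :=
  proper_ideal I /\
  forall a : 'I_n.+1 -> R,
    \prod_(i < n.+1) a i != 0 -> I (\prod_(i < n.+1) a i) ->
    exists j : 'I_n.+1, I (\prod_(i < n.+1 | i != j) a i).

From mathcomp Require Import all_boot all_order all_algebra.
From Stdlib Require Import Classical.
Set Implicit Arguments. Unset Strict Implicit. Unset Printing Implicit Defensive.
Import GRing.Theory.
Local Open Scope ring_scope.

(* Let 0 <> ab \in I with a \notin I. As I \subset P, weak primality of P gives
   a \in P or b \in P = sqrt I. If a \in P but b \notin P, dividedness lets us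
   peel off n - 1 factors b from a, a = b^(n-1) x with x \in P, so that
   0 <> ab = x b^n \in I. Weak n-absorption then puts b^n or x b^(n-1) = a in I;
   the first contradicts b \notin sqrt I, the second a \notin I. *)

Lemma divided_weakly_prime_factor_pow (R : comNzRingType) (P : R -> Prop)
    (a b : R) :
  divided_weakly_prime P -> a != 0 -> P a -> ~ P b ->
  forall k : nat, exists2 x, P x & a = b ^+ k * x.
Proof.
move=> [[_ Pprime] Pdiv] a_neq0 Pa Pb; elim=> [|k [x Px def_a]].
  by exists a; rewrite ?expr0 ?mul1r.
have [r def_x] := Pdiv b Pb x Px.
have br_neq0 : b * r != 0.
  by rewrite -def_x; apply: contraNneq a_neq0 => x0; rewrite def_a x0 mulr0.
have [|//|Pr] := Pprime b r br_neq0; first by rewrite -def_x.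
by exists r; rewrite // def_a def_x exprS mulrA (mulrC (b ^+ k)).
Qed.

Section PowerFactors.

Variables (R : comNzRingType) (n : nat) (x b : R).

Let f (i : 'I_n.+1) : R := if i == ord0 then x else b.

Lemma prod_ord0_pow : \prod_(i < n.+1) f i = x * b ^+ n.
Proof. by rewrite big_ord_recl prodr_const card_ord /f eqxx. Qed.

Lemma prod_omit_ord0 : \prod_(i < n.+1 | i != ord0) f i = b ^+ n.
Proof. by rewrite big_mkcond big_ord_recl /= mul1r /f prodr_const card_ord. Qed.

Lemma prod_omit_lift (j : 'I_n) :
  \prod_(i < n.+1 | i != lift ord0 j) f i = x * b ^+ n.-1.
Proof.
rewrite big_mkcond big_ord_recl /f /=.
transitivity (x * \prod_(i < n | i != j) b); last first.
  by rewrite prodr_const cardC1 card_ord.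
(* [lift ord0 i != lift ord0 j] computes to [i != j]. *)
by rewrite [in RHS]big_mkcond.
Qed.

Lemma weakly_n_absorbing_mul_pow (I : R -> Prop) :
  weakly_n_absorbing n I -> x * b ^+ n != 0 -> I (x * b ^+ n) ->
  I (b ^+ n) \/ I (x * b ^+ n.-1).
Proof.
rewrite -prod_ord0_pow => -[_ absorb] prod_neq0 Iprod.
have [j] := absorb f prod_neq0 Iprod.
case: (unliftP ord0 j) => [j'|] ->.
- by rewrite prod_omit_lift; right.
- by rewrite prod_omit_ord0; left.
Qed.

End PowerFactors.

Theorem mainTheorem16 (R : comNzRingType) (n : nat) (P I : R -> Prop) :
  (0 < n)%N ->
  divided_weakly_prime P ->
  weakly_n_absorbing n I ->
  (forall x : R, radical I x <-> P x) ->
  weakly_primary I.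
Proof.
move=> n_gt0 dP absI radI_P; split=> [|a b ab_neq0 Iab]; first exact: absI.1.
have I_sub_P y : I y -> P y by move=> Iy; apply/radI_P; exists 1%N.
have [Pa|Pb] := dP.1.2 a b ab_neq0 (I_sub_P _ Iab); last by right; apply/radI_P.
have [|Ia] := classic (I a); [by left | right; apply/radI_P].
apply: NNPP => Pb.
have a_neq0 : a != 0 by apply: contraNneq ab_neq0 => ->; rewrite mul0r.
have [x _ def_a] := divided_weakly_prime_factor_pow dP a_neq0 Pa Pb n.-1.
have def_ab : x * b ^+ n = a * b.
  by rewrite def_a -{1}(prednK n_gt0) exprSr mulrCA mulrA.
rewrite -def_ab in ab_neq0 Iab.
have [Ibn|] := weakly_n_absorbing_mul_pow absI ab_neq0 Iab.
  by apply: Pb; apply/radI_P; exists n.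
by rewrite mulrC -def_a.
Qed.
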